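(* Let $D$ be a locatable digraph of order $n$ with $\gamma_{OL}(D)=n$. If a vertex of $D$ is not domination-forced, then it is location-forced; and if a vertex of $D$ is not location-forced, then it is domination-forced.
   Context: Digraphs are finite and may contain loops; between two distinct vertices there may be arcs in one or both directions, no repeated arcs. $N^-(v)=\{u: uv\text{ is an arc}\}$ (contains $v$ iff $v$ has a loop). An OLD set of $D$ is a set $S\subseteq V(D)$ such that every vertex has an in-neighbour in $S$ and for every two distinct vertices $u,w$ some vertex of $S$ lies in exactly one of $N^-(u),N^-(w)$. $D$ is locatable if it has an OLD set, and then $\gamma_{OL}(D)$ is the minimum size of an OLD set. A vertex $v$ is domination-forced if some vertex $w$ has $N^-(w)=\{v\}$; it is location-forced if there are distinct vertices $x,y$ with $N^-(x)\ominus N^-(y)=\{v\}$ ($\ominus$ = symmetric difference). *)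

From mathcomp Require Import all_boot.
Set Implicit Arguments. Unset Strict Implicit. Unset Printing Implicit Defensive.

(* A digraph on a finite vertex type V is given by its arc relation
   arc : rel V, where arc u v means "uv is an arc" (loops allowed,
   at most one arc per ordered pair). *)

Definition in_nbhd (V : finType) (arc : rel V) (v : V) : {set V} :=
  [set u | arc u v].

Definition is_OLD (V : finType) (arc : rel V) (S : {set V}) : Prop :=
  (forall v : V, exists2 s, s \in S & s \in in_nbhd arc v) /\
  (forall u w : V, u != w ->
     exists2 s, s \in S &
       (s \in in_nbhd arc u) != (s \in in_nbhd arc w)).

Definition locatable (V : finType) (arc : rel V) : Prop :=
  exists S : {set V}, is_OLD arc S.

Definition gamma_OL_is (V : finType) (arc : rel V) (k : nat) : Prop :=
  (exists S : {set V}, is_OLD arc S /\ #|S| = k) /\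
  (forall S : {set V}, is_OLD arc S -> k <= #|S|).

Definition domination_forced (V : finType) (arc : rel V) (v : V) : Prop :=
  exists w : V, in_nbhd arc w = [set v].

Definition location_forced (V : finType) (arc : rel V) (v : V) : Prop :=
  exists x y : V, x != y /\
    (in_nbhd arc x :\: in_nbhd arc y) :|: (in_nbhd arc y :\: in_nbhd arc x)
      = [set v].

From mathcomp Require Import all_boot.
From Stdlib Require Import Classical.

Set Implicit Arguments.
Unset Strict Implicit.
Unset Printing Implicit Defensive.

(* If v is neither domination- nor location-forced, then V \ {v} is still an
   OLD set.  Locatability makes every in-neighbourhood, and every symmetric
   difference of two distinct in-neighbourhoods, nonempty; as none of these
   sets is {v}, each contains a vertex other than v.  An OLD set of size n - 1
   contradicts gamma_OL(D) = n. *)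

Section FinsetFacts.

Variable T : finType.
Implicit Types A B : {set T}.

Definition setSD A B : {set T} := (A :\: B) :|: (B :\: A).

Lemma in_setSD A B x : (x \in setSD A B) = ((x \in A) != (x \in B)).
Proof. by rewrite !inE; case: (x \in A); case: (x \in B). Qed.

Lemma setSD_neq0 A B : A != B -> setSD A B != set0.
Proof.
apply: contraNneq => /setP SD0; apply/eqP/setP => x.
by move: (SD0 x); rewrite in_setSD inE => /negbFE/eqP.
Qed.

Lemma exists_neq_set1 A a :
  A != set0 -> A != [set a] -> exists2 x, x \in A & x != a.
Proof.
move=> A0 Aa; apply/exists_inP; rewrite -negb_forall_in; apply: contra Aa.
move=> /forall_inP Aa'; have : A \subset [set a].
  by apply/subsetP => x /Aa'; rewrite inE.
by rewrite subset1 (negbTE A0) orbF.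
Qed.

End FinsetFacts.

Section LocatableDigraph.

Variables (V : finType) (arc : rel V).
Hypothesis locD : locatable arc.

Lemma locatable_in_nbhd_neq0 w : in_nbhd arc w != set0.
Proof.
have [S [dom _]] := locD; have [s _ Nws] := dom w.
by apply/set0Pn; exists s.
Qed.

Lemma locatable_in_nbhd_inj u w : u != w -> in_nbhd arc u != in_nbhd arc w.
Proof.
have [S [_ sep]] := locD => uw; have [s _] := sep u w uw.
by apply: contra_neq => ->.
Qed.

Lemma OLD_setC1 v :
  ~ domination_forced arc v -> ~ location_forced arc v -> is_OLD arc [set~ v].
Proof.
move=> not_dom not_loc; split=> [w | u w uw].
- have [|s Nws sv] := exists_neq_set1 (a := v) (locatable_in_nbhd_neq0 w).
    by apply/eqP => Nw; apply: not_dom; exists w.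
  by exists s; rewrite ?in_setC1.
- have uw_sep := setSD_neq0 (locatable_in_nbhd_inj uw).
  have [|s SDs sv] := exists_neq_set1 (a := v) uw_sep.
    by apply/eqP => SD; apply: not_loc; exists u, w.
  by exists s; rewrite ?in_setC1 -?in_setSD.
Qed.

End LocatableDigraph.

Theorem corollary6 (V : finType) (arc : rel V) :
  locatable arc -> gamma_OL_is arc #|V| ->
  (forall v : V, ~ domination_forced arc v -> location_forced arc v) /\
  (forall v : V, ~ location_forced arc v -> domination_forced arc v).
Proof.
move=> locD [_ min_OLD].
have not_unforced v :
    ~ domination_forced arc v -> ~ location_forced arc v -> False.
  move=> not_dom not_loc; have := min_OLD _ (OLD_setC1 locD not_dom not_loc).
  by rewrite cardsC1 (cardD1 v) add1n ltnn.
by split=> v forced; apply: NNPP => unforced; apply: (not_unforced v).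
Qed.
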